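(* GTDS is co-recursively-enumerable, i.e., the set of GTDS instances that have no solution is recursively enumerable.
   Context: An instance of GTDS consists of a rational discount factor $0<\lambda<1$, a rational target $t$, and rational weights $a_1,\dots,a_k$ ($k\in\mathbb N$); a solution is an infinite sequence $w\in\{a_1,\dots,a_k\}^\omega$ with $\sum_{i=0}^\infty w(i)\lambda^i=t$. *)

From HB Require Import structures.
From mathcomp Require Import all_boot all_order all_algebra.
From mathcomp Require Import all_classical all_reals all_analysis.
From mathcomp Require Import Rstruct Rstruct_topology.

Set Implicit Arguments.
Unset Strict Implicit.
Unset Printing Implicit Defensive.
Import Order.TTheory GRing.Theory Num.Theory.
Import numFieldNormedType.Exports.
Local Open Scope classical_set_scope.
Local Open Scope ring_scope.

Definition gtds_solution (lam t : rat) (ws : seq rat) (w : nat -> rat) : Prop :=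
  (forall i, w i \in ws) /\
  ((fun n => \sum_(0 <= i < n) (ratr (w i) * ratr lam ^+ i : Rdefinitions.R)) @ \oo
     --> (ratr t : Rdefinitions.R)).

Definition gtds_has_solution (lam t : rat) (ws : seq rat) : Prop :=
  exists w : nat -> rat, gtds_solution lam t ws w.

(* Untyped syntax of primitive recursive functions, evaluated on argument lists
   (missing arguments default to 0). *)
Inductive PR : Type :=
| PRzero : PR
| PRsucc : PR
| PRproj : nat -> PR
| PRcomp : PR -> list PR -> PR
| PRrec  : PR -> PR -> PR.         (* h(0,xs) = f xs ; h(m+1,xs) = g(m, h(m,xs), xs) *)

Fixpoint pr_eval (p : PR) (xs : seq nat) {struct p} : nat :=
  match p with
  | PRzero => 0%N
  | PRsucc => (head 0%N xs).+1
  | PRproj i => nth 0%N xs i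
  | PRcomp f gs =>
      pr_eval f ((fix evs (l : list PR) : seq nat :=
                    match l with
                    | nil => [::]
                    | cons g l' => pr_eval g xs :: evs l'
                    end) gs)
  | PRrec f g =>
      let rest := behead xs in
      nat_rect (fun _ => nat) (pr_eval f rest)
               (fun m acc => pr_eval g [:: m, acc & rest]) (head 0%N xs)
  end.

(* A set of naturals is recursively enumerable iff it is the projection of a
   primitive recursive relation (Kleene normal form). *)
Definition re_set (P : nat -> Prop) : Prop :=
  exists p : PR, forall x : nat, P x <-> exists n : nat, pr_eval p [:: n; x] = 0%N.

Definition nat_pair (a b : nat) : nat := ((a + b) * (a + b).+1) %/ 2 + b.

Definition code_int (z : int) : nat :=
  match z with Posz n => n.*2 | Negz n => n.*2.+1 end.

Definition code_rat (q : rat) : nat := nat_pair (code_int (numq q)) (code_int (denq q)).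

Fixpoint code_seq (s : seq rat) : nat :=
  match s with [::] => 0%N | q :: s' => (nat_pair (code_rat q) (code_seq s')).+1 end.

Definition code_instance (lam t : rat) (ws : seq rat) : nat :=
  nat_pair (code_rat lam) (nat_pair (code_rat t) (code_seq ws)).

Definition gtds_code (x : nat) : Prop :=
  exists lam t ws, 0 < lam < 1 /\ x = code_instance lam t ws.

Definition gtds_no_solution_set (x : nat) : Prop :=
  exists lam t ws, 0 < lam < 1 /\ x = code_instance lam t ws /\
                   ~ gtds_has_solution lam t ws.

From HB Require Import structures.
From mathcomp Require Import all_boot all_order all_algebra.
From mathcomp Require Import all_classical all_reals all_analysis.
From mathcomp Require Import Rstruct Rstruct_topology.
From mathcomp Require Import ring zify.

(* A word [w] over the weights is a solution iff every prefix satisfies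
     (1 - lam) |t - sum_(i < N) w_i lam^i| <= lam^N M,   M = sum_(a in ws) |a|:
   the bound holds because the tail of a solution is at most lam^N M / (1 - lam) in absolute
   value, and it forces the partial sums to converge to [t].  The finite words satisfying it are
   closed under prefixes and form a finitely branching tree, so by Koenig's lemma an instance has
   a solution iff for every [N] some word of length [N] satisfies the bound.  For fixed [N] this
   is a finite search in exact rational arithmetic, primitive recursive in [N] and in the code of
   the instance, so the instances without solution are the projection of a primitive recursive
   relation. *)

Set Implicit Arguments.
Unset Strict Implicit.
Unset Printing Implicit Defensive.
Import Order.TTheory GRing.Theory Num.Theory.
Import numFieldNormedType.Exports.
Local Open Scope classical_set_scope.
Local Open Scope ring_scope.

(** * Approximating prefixes *)

Definition approx_word (R : numDomainType) (lam t : R) (ws : seq R) N (w : nat -> R) : Prop :=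
  (forall i, (i < N)%N -> w i \in ws) /\
  (1 - lam) * `|t - \sum_(0 <= i < N) w i * lam ^+ i| <= lam ^+ N * \sum_(a <- ws) `|a|.

Definition approx_prefix (R : numDomainType) (lam t : R) (ws : seq R) N : Prop :=
  exists w, approx_word lam t ws N w.

Lemma norm_le_sum_norm (R : numDomainType) (ws : seq R) a :
  a \in ws -> `|a| <= \sum_(b <- ws) `|b|.
Proof. by move=> a_in; rewrite (big_rem a a_in) /= lerDl sumr_ge0. Qed.

Lemma sum_tail_bound (R : realFieldType) (lam M : R) (w : nat -> R) N d :
  lam < 1 -> 0 <= lam -> (forall i, `|w i| <= M) ->
  (1 - lam) * `|\sum_(N <= i < N + d) w i * lam ^+ i| <= M * (lam ^+ N - lam ^+ (N + d)).
Proof.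
move=> lam_lt1 lam_ge0 w_le; elim: d => [|d IH].
  by rewrite addn0 big_geq // normr0 mulr0 subrr mulr0.
rewrite addnS big_nat_recr ?leq_addr //= exprS.
have lamNd_ge0 : 0 <= lam ^+ (N + d) := exprn_ge0 _ lam_ge0.
have step :
    (1 - lam) * `|w (N + d) * lam ^+ (N + d)| <= M * (lam ^+ (N + d) - lam * lam ^+ (N + d)).
  rewrite normrM (ger0_norm lamNd_ge0) (_ : M * _ = (1 - lam) * (M * lam ^+ (N + d))); last by ring.
  by apply: ler_wpM2l; [rewrite subr_ge0 ltW | apply: ler_wpM2r].
apply: le_trans (ler_wpM2l _ (ler_normD _ _)) _; first by rewrite subr_ge0 ltW.
by rewrite mulrDr; apply: le_trans (lerD IH step) _; rewrite -mulrDr addrA subrK.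
Qed.

Lemma exists_bound_seq (T : eqType) (s : seq T) (P : T -> nat -> Prop) :
  (forall a m m', (m <= m')%N -> P a m -> P a m') ->
  (forall a, a \in s -> exists m, P a m) -> exists m, forall a, a \in s -> P a m.
Proof.
move=> P_mono; elim: s => [|b s IH] bounded; first by exists 0%N.
have [mb Pb] := bounded b (mem_head b s).
have [|ms Ps] := IH => [a a_in|]; first by apply: bounded; rewrite inE a_in orbT.
exists (maxn mb ms) => a; rewrite inE => /predU1P [->|a_in].
  exact: P_mono (leq_maxl _ _) Pb.
exact: P_mono (leq_maxr _ _) (Ps a a_in).
Qed.

Section Compactness.

Variables (R : realFieldType) (lam t : R) (ws : seq R).
Hypotheses (lam_ge0 : 0 <= lam) (lam_lt1 : lam < 1).

Lemma approx_word_ext N w w' : (forall i, (i < N)%N -> w i = w' i) ->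
  approx_word lam t ws N w -> approx_word lam t ws N w'.
Proof.
move=> ww' [w_in w_ok]; split=> [i lt_iN|]; first by rewrite -ww' ?w_in.
rewrite (eq_big_nat _ _ (F2 := fun i => w i * lam ^+ i)) // => i /andP [_ lt_iN].
by rewrite ww'.
Qed.

Lemma approx_wordS N w : approx_word lam t ws N.+1 w -> approx_word lam t ws N w.
Proof.
move=> [w_in w_ok]; split=> [i lt_iN|]; first exact/w_in/ltnW.
rewrite big_nat_recr //= in w_ok; set M := \sum_(a <- ws) `|a| in w_ok *.
have lamN_ge0 : 0 <= lam ^+ N := exprn_ge0 _ lam_ge0.
have wN_le : (1 - lam) * `|w N * lam ^+ N| <= (1 - lam) * lam ^+ N * M.
  rewrite normrM (ger0_norm lamN_ge0) -mulrA ler_wpM2l ?subr_ge0 ?(ltW lam_lt1) //.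
  by rewrite mulrC ler_wpM2l // norm_le_sum_norm ?w_in.
have split_sum : t - \sum_(0 <= i < N) w i * lam ^+ i =
    (t - (\sum_(0 <= i < N) w i * lam ^+ i + w N * lam ^+ N)) + w N * lam ^+ N by ring.
rewrite split_sum; apply: le_trans (ler_wpM2l _ (ler_normD _ _)) _.
  by rewrite subr_ge0 ltW.
rewrite mulrDr (_ : lam ^+ N * _ = lam ^+ N.+1 * M + (1 - lam) * lam ^+ N * M).
  exact: lerD w_ok wN_le.
by rewrite exprS; ring.
Qed.

Lemma approx_word_le N N' w :
  (N <= N')%N -> approx_word lam t ws N' w -> approx_word lam t ws N w.
Proof. by move=> /subnK <-; elim: (N' - N)%N => // d IH /approx_wordS. Qed.

Definition extendable n (f : nat -> R) :=
  forall m, exists g, (forall i, (i < n)%N -> g i = f i) /\ approx_word lam t ws (n + m) g.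

Lemma extendable_step n f : extendable n f -> exists a, extendable n.+1 [eta f with n |-> a].
Proof.
(* Otherwise every letter has a depth beyond which it cannot be extended; one depth works for
   all letters, and an extension of [f] to that depth gives a contradiction. *)
move=> ext_f; apply: contrapT => /forallNP no_ext.
pose dead a m := ~ exists g, (forall i, (i < n.+1)%N -> g i = [eta f with n |-> a] i) /\
  approx_word lam t ws (n.+1 + m) g.
have [||m all_dead] := @exists_bound_seq _ ws dead.
- move=> a m m' le_mm' dead_m [g [agree ok]]; apply: dead_m; exists g; split=> //.
  by apply: approx_word_le ok; rewrite leq_add2l.
- by move=> a _; apply/existsNP/no_ext.
have [g [agree ok]] := ext_f m.+1.
apply: (all_dead (g n)); first by apply: ok.1; rewrite addnS ltnS leq_addr.
exists g; split; last by rewrite addSnnS.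
move=> i; rewrite ltnS leq_eqVlt /= => /predU1P [->|lt_in]; first by rewrite eqxx.
by rewrite (ltn_eqF lt_in) agree.
Qed.

Lemma approx_prefixes_word :
  (forall N, approx_prefix lam t ws N) -> exists w, forall N, approx_word lam t ws N w.
Proof.
move=> all_N.
(* Koenig's lemma: extend the word one letter at a time, keeping it extendable. *)
pose choose n f := xget 0 [set a | extendable n.+1 [eta f with n |-> a]].
pose fix fs n := if n is n'.+1 then [eta fs n' with n' |-> choose n' (fs n')] else fun=> 0.
have ext_fs n : extendable n (fs n).
  elim: n => [m|n IH]; first by have [w w_ok] := all_N m; exists w.
  exact: xgetPex (extendable_step IH).
have fs_stable m i : (i < m)%N -> fs m i = fs i.+1 i.
  elim: m => // m IH; rewrite ltnS leq_eqVlt => /predU1P [->|lt_im] //=.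
  by rewrite (ltn_eqF lt_im) IH.
exists (fun i => fs i.+1 i) => N; have [g [agree ok]] := ext_fs N 0%N.
rewrite addn0 in ok; apply: approx_word_ext ok => i lt_iN.
by rewrite agree // fs_stable.
Qed.

End Compactness.

Section Convergence.

Variables (R : realType) (lam t M : R) (w : nat -> R).
Hypotheses (lam_ge0 : 0 <= lam) (lam_lt1 : lam < 1) (w_le : forall i, `|w i| <= M).

Let S n := \sum_(0 <= i < n) w i * lam ^+ i.

Lemma cvg_partial_sum_bound : S @ \oo --> t -> forall N, (1 - lam) * `|t - S N| <= lam ^+ N * M.
Proof.
move=> S_t N; have M_ge0 : 0 <= M := le_trans (normr_ge0 _) (w_le 0).
have tail n : (N <= n)%N -> (1 - lam) * `|S n - S N| <= lam ^+ N * M.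
  move=> /subnKC <-; rewrite /S (@big_cat_nat _ _ _ N) ?leq_addr //=.
  rewrite addrAC subrr add0r.
  apply: le_trans (sum_tail_bound N (n - N) lam_lt1 lam_ge0 w_le) _.
  by rewrite mulrC; apply: ler_wpM2r => //; rewrite lerBlDr lerDl exprn_ge0.
have u_le : \forall n \near \oo, (1 - lam) * `|S n - S N| <= lam ^+ N * M.
  by near=> n; apply: tail; near: n; exact: nbhs_infty_ge.
have u_cvg : (fun n => (1 - lam) * `|S n - S N|) @ \oo --> (1 - lam) * `|t - S N|.
  by apply: cvgMl_tmp; apply: cvg_norm; apply: cvgB S_t _; apply: cvg_cst.
exact: (closed_cvg _ (@closed_le _ (lam ^+ N * M)) u_le _ u_cvg).
Unshelve. all: by end_near.
Qed.

Lemma bound_cvg_partial_sum : (forall N, (1 - lam) * `|t - S N| <= lam ^+ N * M) -> S @ \oo --> t.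
Proof.
move=> bound; apply/cvgrPdist_lt => e e_gt0.
have lam1_gt0 : 0 < 1 - lam by rewrite subr_gt0.
have : (fun N => lam ^+ N * (M / (1 - lam))) @ \oo --> 0.
  by rewrite -(mul0r (M / (1 - lam))); apply: cvgMr_tmp; apply: cvg_expr; rewrite ger0_norm.
move=> /cvgr_dist_lt /(_ e e_gt0); apply: filterS => N; rewrite sub0r normrN => small.
apply: le_lt_trans small; apply: le_trans (ler_norm _).
by rewrite mulrA ler_pdivlMr // mulrC; apply: bound.
Qed.

End Convergence.

Lemma ratr_approx_bound (R : realType) (lam t M : rat) (w : nat -> rat) N :
  ((1 - ratr lam) * `|ratr t - \sum_(0 <= i < N) ratr (w i) * ratr lam ^+ i|
      <= ratr lam ^+ N * ratr M :> R)
  = ((1 - lam) * `|t - \sum_(0 <= i < N) w i * lam ^+ i| <= lam ^+ N * M).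
Proof.
rewrite -(ler_rat R) !rmorphM /= ratr_norm !rmorphB /= rmorph1 rmorph_sum /= rmorphXn /=.
by congr ((_ * `|_ - _|) <= _); apply: eq_bigr => i _; rewrite rmorphM rmorphXn.
Qed.

Lemma gtds_has_solutionP (lam t : rat) (ws : seq rat) : 0 < lam < 1 ->
  gtds_has_solution lam t ws <-> forall N, approx_prefix lam t ws N.
Proof.
case/andP => lam_gt0 lam_lt1; set M := \sum_(a <- ws) `|a|.
have lamR_ge0 : 0 <= ratr lam :> Rdefinitions.R by rewrite ler0q ltW.
have lamR_lt1 : ratr lam < 1 :> Rdefinitions.R.
  by rewrite -(rmorph1 (@ratr Rdefinitions.R)) ltr_rat.
split=> [[w [w_in S_t]] N | all_N].
  exists w; split=> [i _|]; first exact: w_in.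
  rewrite -(ratr_approx_bound Rdefinitions.R).
  apply: (cvg_partial_sum_bound lamR_ge0 lamR_lt1 _ S_t) => i.
  by rewrite -ratr_norm ler_rat norm_le_sum_norm.
have [w w_ok] := approx_prefixes_word (ltW lam_gt0) lam_lt1 all_N.
have w_in i : w i \in ws by apply: (w_ok i.+1).1.
exists w; split=> //; apply: (bound_cvg_partial_sum lamR_ge0 lamR_lt1 (M := ratr M)) => N.
by rewrite ratr_approx_bound; exact: (w_ok N).2.
Qed.

(** * Primitive recursive functions *)

Local Open Scope nat_scope.

Definition primrec (n : nat) (f : seq nat -> nat) : Prop :=
  exists p : PR, forall xs, size xs = n -> pr_eval p xs = f xs.

Lemma primrec_ext n f g :
  (forall xs, size xs = n -> f xs = g xs) -> primrec n f -> primrec n g.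
Proof. by move=> fg [p Hp]; exists p => xs Hxs; rewrite Hp // fg. Qed.

Lemma primrec_zero n : primrec n (fun _ => 0).
Proof. by exists PRzero. Qed.

Lemma primrec_succ n : primrec n (fun xs => (nth 0 xs 0).+1).
Proof. by exists PRsucc. Qed.

Lemma primrec_nth n i : primrec n (fun xs => nth 0 xs i).
Proof. by exists (PRproj i). Qed.

Lemma primrec_comp n F Gs : primrec (size Gs) F -> List.Forall (primrec n) Gs ->
  primrec n (fun xs => F (map (fun g => g xs) Gs)).
Proof.
move=> [pF HF] HGs.
have [ps [size_ps eval_ps]] : exists ps, size ps = size Gs /\ forall xs, size xs = n ->
    map (fun g => pr_eval g xs) ps = map (fun g => g xs) Gs.
  elim: HGs => [|g Gs' [pg Hg] _ [ps [size_ps eval_ps]]]; first by exists [::].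
  exists (pg :: ps); split => [|xs Hxs]; first by rewrite /= size_ps.
  by rewrite /= Hg // eval_ps.
exists (PRcomp pF ps) => xs Hxs.
by rewrite /= -/(map (fun g => pr_eval g xs) ps) eval_ps // HF // size_map.
Qed.

Lemma primrec_rec n F G : primrec n F -> primrec n.+2 G ->
  primrec n.+1 (fun xs => nat_rect (fun _ => nat) (F (behead xs))
                  (fun m acc => G [:: m, acc & behead xs]) (nth 0 xs 0)).
Proof.
move=> [pF HF] [pG HG]; exists (PRrec pF pG) => xs Hxs /=.
rewrite HF; last by rewrite size_behead Hxs.
rewrite -[head 0 xs]/(nth 0 xs 0).
by elim: (nth 0 xs 0) => //= m ->; rewrite HG //= size_behead Hxs.
Qed.

Lemma primrec_nths n idx : List.Forall (primrec n) [seq (fun xs => nth 0 xs i) | i <- idx].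
Proof. by elim: idx => [|i idx IH] /=; constructor => //; apply: primrec_nth. Qed.

Lemma primrec_select n m F idx : size idx = m -> primrec m F ->
  primrec n (fun xs => F [seq nth 0 xs i | i <- idx]).
Proof.
move=> <- HF; have := primrec_comp _ (primrec_nths n idx); rewrite size_map => /(_ F HF).
by apply: primrec_ext => xs _; rewrite -map_comp.
Qed.

Lemma primrec_behead n F : primrec n F -> primrec n.+1 (fun ys => F (behead ys)).
Proof.
move=> /(primrec_select n.+1 (size_iota 1 n)); apply: primrec_ext => ys Hys.
rewrite map_nth_iota ?Hys; last lia.
by rewrite take_oversize ?drop1 // size_behead Hys.
Qed.

Lemma primrec_drop_snd n F : primrec n.+1 F ->
  primrec n.+2 (fun ys => F (nth 0 ys 0 :: behead (behead ys))).
Proof.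
move=> /(@primrec_select n.+2 _ _ (0 :: iota 2 n) (congr1 succn (size_iota 2 n))).
apply: primrec_ext => ys Hys.
rewrite /= map_nth_iota ?Hys; last lia.
rewrite take_oversize ?size_drop ?Hys; last lia.
by case: ys Hys => [|y [|y1 ys]] //= _; rewrite drop0.
Qed.

Lemma primrec_cons n F A : primrec n.+1 F -> primrec n A -> primrec n (fun xs => F (A xs :: xs)).
Proof.
move=> HF HA; have := @primrec_comp n F (A :: [seq (fun xs => nth 0 xs i) | i <- iota 0 n]).
rewrite /= size_map size_iota => /(_ HF (List.Forall_cons _ HA (primrec_nths _ _))).
apply: primrec_ext => xs Hxs; rewrite -map_comp.
by rewrite -Hxs map_nth_iota0 // take_size.
Qed.

Lemma primrec_nat_rect n A B G : primrec n A -> primrec n B ->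
  primrec n.+2 (fun ys => G (nth 0 ys 0) (nth 0 ys 1) (behead (behead ys))) ->
  primrec n (fun xs => nat_rect (fun _ => nat) (B xs) (fun m acc => G m acc xs) (A xs)).
Proof. by move=> HA HB HG; apply: (primrec_cons (primrec_rec HB HG) HA). Qed.

Lemma primrec_nth_beheads n k i : primrec n (fun ys => nth 0 (iter k behead ys) i).
Proof.
apply: primrec_ext (primrec_nth n (k + i)) => ys _.
by elim: k i => // k IH i; rewrite iterS nth_behead -IH addSnnS.
Qed.

Lemma primrec_unop (op : nat -> nat) n f :
  primrec 1 (fun xs => op (nth 0 xs 0)) -> primrec n f -> primrec n (fun xs => op (f xs)).
Proof.
by move=> Hop Hf; apply: (primrec_comp (F := fun ys => op (nth 0 ys 0)) (Gs := [:: f])) => //;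
  constructor.
Qed.

Lemma primrec_binop (op : nat -> nat -> nat) n f g :
  primrec 2 (fun xs => op (nth 0 xs 0) (nth 0 xs 1)) -> primrec n f -> primrec n g ->
  primrec n (fun xs => op (f xs) (g xs)).
Proof.
move=> Hop Hf Hg.
by apply: (primrec_comp (F := fun ys => op (nth 0 ys 0) (nth 0 ys 1)) (Gs := [:: f; g])) => //;
  constructor=> //; constructor.
Qed.

Lemma primrec_S n f : primrec n f -> primrec n (fun xs => (f xs).+1).
Proof. exact: primrec_unop (primrec_succ 1). Qed.

Lemma primrec_const n c : primrec n (fun _ => c).
Proof. by elim: c => [|c IH]; [exact: primrec_zero | exact: primrec_S]. Qed.

Lemma primrec_add n f g : primrec n f -> primrec n g -> primrec n (fun xs => f xs + g xs).
Proof.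
apply: primrec_binop; have := primrec_nat_rect (G := fun _ acc _ => acc.+1)
  (primrec_nth 2 0) (primrec_nth 2 1) (primrec_S (primrec_nth _ 1)).
by apply: primrec_ext => xs _; elim: (nth 0 xs 0) => //= m ->.
Qed.

Lemma primrec_mul n f g : primrec n f -> primrec n g -> primrec n (fun xs => f xs * g xs).
Proof.
apply: primrec_binop; have := primrec_nat_rect (G := fun _ acc xs => acc + nth 0 xs 1)
  (primrec_nth 2 0) (primrec_const 2 0)
  (primrec_add (primrec_nth _ 1) (primrec_nth_beheads _ 2 1)).
by apply: primrec_ext => xs _; elim: (nth 0 xs 0) => //= m ->; rewrite mulSn addnC.
Qed.

Lemma primrec_pred n f : primrec n f -> primrec n (fun xs => (f xs).-1).
Proof.
apply: primrec_unop; have := primrec_nat_rect (G := fun m _ _ => m)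
  (primrec_nth 1 0) (primrec_const 1 0) (primrec_nth _ 0).
by apply: primrec_ext => xs _; case: (nth 0 xs 0).
Qed.

Lemma primrec_sub n f g : primrec n f -> primrec n g -> primrec n (fun xs => f xs - g xs).
Proof.
apply: primrec_binop; have := primrec_nat_rect (G := fun _ acc _ => acc.-1)
  (primrec_nth 2 1) (primrec_nth 2 0) (primrec_pred (primrec_nth _ 1)).
by apply: primrec_ext => xs _; elim: (nth 0 xs 1) => /= [|m ->]; rewrite ?subn0 ?subnS.
Qed.

Lemma primrec_iter n A B G : primrec n.+1 (fun ys => G (nth 0 ys 0) (behead ys)) ->
  primrec n A -> primrec n B -> primrec n (fun xs => iter (A xs) (fun v => G v xs) (B xs)).
Proof.
move=> HG HA HB.
have HG' : primrec n.+2 (fun ys => G (nth 0 ys 1) (behead (behead ys))).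
  by apply: primrec_ext (primrec_behead HG) => -[|y ys].
have := primrec_nat_rect (G := fun _ acc xs => G acc xs) HA HB HG'.
by apply: primrec_ext => xs _; elim: (A xs) => //= m ->.
Qed.

Lemma primrec_sum n F B : primrec n.+1 (fun ys => F (nth 0 ys 0) (behead ys)) -> primrec n B ->
  primrec n (fun xs => \sum_(0 <= i < B xs) F i xs).
Proof.
move=> HF HB; have := primrec_nat_rect (G := fun m acc xs => acc + F m xs) HB
  (primrec_const n 0) (primrec_add (primrec_nth _ 1) (primrec_drop_snd HF)).
apply: primrec_ext => xs _; elim: (B xs) => [|m IH]; first by rewrite big_geq.
by rewrite big_nat_recr //= IH.
Qed.

Lemma primrec_leq n f g : primrec n f -> primrec n g ->
  primrec n (fun xs => nat_of_bool (f xs <= g xs)).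
Proof.
move=> Hf Hg; apply: primrec_ext (primrec_sub (primrec_const n 1) (primrec_sub Hf Hg)).
by move=> xs _; rewrite -subn_eq0; case: (f xs - g xs).
Qed.

Lemma primrec_negb n b : primrec n (fun xs => nat_of_bool (b xs)) ->
  primrec n (fun xs => nat_of_bool (~~ b xs)).
Proof.
move=> Hb; apply: primrec_ext (primrec_sub (primrec_const n 1) Hb).
by move=> xs _; case: (b xs).
Qed.

Lemma primrec_andb n b c : primrec n (fun xs => nat_of_bool (b xs)) ->
  primrec n (fun xs => nat_of_bool (c xs)) -> primrec n (fun xs => nat_of_bool (b xs && c xs)).
Proof.
move=> Hb Hc; apply: primrec_ext (primrec_mul Hb Hc).
by move=> xs _; case: (b xs); case: (c xs).
Qed.

Lemma primrec_implb n b c : primrec n (fun xs => nat_of_bool (b xs)) ->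
  primrec n (fun xs => nat_of_bool (c xs)) -> primrec n (fun xs => nat_of_bool (b xs ==> c xs)).
Proof.
move=> Hb Hc; apply: primrec_ext (primrec_negb (primrec_andb Hb (primrec_negb Hc))).
by move=> xs _; case: (b xs); case: (c xs).
Qed.

Lemma primrec_eqn n f g : primrec n f -> primrec n g ->
  primrec n (fun xs => nat_of_bool (f xs == g xs)).
Proof.
move=> Hf Hg; apply: primrec_ext (primrec_andb (primrec_leq Hf Hg) (primrec_leq Hg Hf)).
by move=> xs _; rewrite eqn_leq.
Qed.

Lemma primrec_if n b f g : primrec n (fun xs => nat_of_bool (b xs)) -> primrec n f -> primrec n g ->
  primrec n (fun xs => if b xs then f xs else g xs).
Proof.
move=> Hb Hf Hg.
apply: primrec_ext (primrec_add (primrec_mul Hb Hf) (primrec_mul (primrec_negb Hb) Hg)).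
by move=> xs _; case: (b xs); rewrite /= ?mul1n ?mul0n ?addn0.
Qed.

Lemma primrec_all_iota n F B :
  primrec n.+1 (fun ys => nat_of_bool (F (nth 0 ys 0) (behead ys))) -> primrec n B ->
  primrec n (fun xs => nat_of_bool (all (fun i => F i xs) (iota 0 (B xs)))).
Proof.
move=> HF HB.
have := primrec_eqn (primrec_sum (F := fun i xs => nat_of_bool (~~ F i xs)) (primrec_negb HF) HB)
  (primrec_const n 0).
apply: primrec_ext => xs _; rewrite sum_nat_seq_eq0 /index_iota subn0.
by congr nat_of_bool; apply: eq_all => i; case: (F i xs).
Qed.

Lemma primrec_expn n f g : primrec n f -> primrec n g -> primrec n (fun xs => f xs ^ g xs).
Proof.
move=> Hf Hg; have Hmul := primrec_mul (primrec_behead Hf) (primrec_nth _ 0).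
apply: primrec_ext (primrec_iter (G := fun v xs => f xs * v) Hmul Hg (primrec_const n 1)).
by move=> xs _; elim: (g xs) => //= m ->; rewrite expnS.
Qed.

(* [primrec_auto] decomposes [primrec n f] along the head symbol of the body of [f]; the hook
   is redefined below each time new primitive recursive operations become available. *)
Ltac primrec_hook := fail.

Ltac primrec_step :=
  lazymatch goal with
  | |- primrec _ (fun _ => ?c) => apply: primrec_const
  | |- primrec _ (fun _ => nth 0 _ _) =>
      first [ apply: (primrec_nth_beheads _ 0) | apply: (primrec_nth_beheads _ 1)
            | apply: (primrec_nth_beheads _ 2) | apply: (primrec_nth_beheads _ 3)
            | apply: (primrec_nth_beheads _ 4) | apply: (primrec_nth_beheads _ 5) ]
  | |- primrec _ (fun _ => _.+1) => apply: primrec_S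
  | |- primrec _ (fun _ => _.-1) => apply: primrec_pred
  | |- primrec _ (fun _ => _ + _) => apply: primrec_add
  | |- primrec _ (fun _ => _ * _) => apply: primrec_mul
  | |- primrec _ (fun _ => _ - _) => apply: primrec_sub
  | |- primrec _ (fun _ => _ ^ _) => apply: primrec_expn
  | |- primrec _ (fun _ => nat_of_bool (_ <= _)) => apply: primrec_leq
  | |- primrec _ (fun _ => nat_of_bool (_ == _)) => apply: primrec_eqn
  | |- primrec _ (fun _ => nat_of_bool (~~ _)) => apply: primrec_negb
  | |- primrec _ (fun _ => nat_of_bool (_ && _)) => apply: primrec_andb
  | |- primrec _ (fun _ => nat_of_bool (_ ==> _)) => apply: primrec_implb
  | |- primrec _ (fun _ => nat_of_bool (all _ (iota 0 _))) => apply: primrec_all_iota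
  | |- primrec _ (fun _ => if _ then _ else _) => apply: primrec_if
  | |- primrec _ (fun _ => \sum_(0 <= _ < _) _) => apply: primrec_sum
  | |- primrec _ (fun _ => iter _ _ _) => apply: primrec_iter
  | _ => primrec_hook
  end.

Ltac primrec_auto := repeat (primrec_step; cbv beta).

Lemma sum_ltn u s : \sum_(0 <= z < u) (z < s) = minn u s.
Proof.
elim: u => [|u IH]; first by rewrite big_geq // min0n.
by rewrite big_nat_recr //= IH; case: (ltnP u s) => Hus /=; lia.
Qed.

Lemma sum_mul_leq u m : 0 < m -> \sum_(0 <= z < u) (z.+1 * m <= u) = u %/ m.
Proof.
move=> m_gt0; rewrite (eq_bigr (fun z => nat_of_bool (z < u %/ m))) => [|z _]; last first.
  by rewrite leq_divRL.
by rewrite sum_ltn; apply/minn_idPr; apply: leq_div.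
Qed.

Lemma primrec_divn n f g : primrec n f -> primrec n g -> primrec n (fun xs => f xs %/ g xs).
Proof.
apply: primrec_binop; apply: (@primrec_ext _ (fun xs => if nth 0 xs 1 == 0 then 0 else
    \sum_(0 <= z < nth 0 xs 0) (z.+1 * nth 0 xs 1 <= nth 0 xs 0))); last by primrec_auto.
move=> xs _; case: eqP => [->|/eqP]; first by rewrite divn0.
by rewrite -lt0n => /sum_mul_leq.
Qed.

Lemma primrec_modn n f g : primrec n f -> primrec n g -> primrec n (fun xs => f xs %% g xs).
Proof.
move=> Hf Hg; apply: primrec_ext (primrec_sub Hf (primrec_mul (primrec_divn Hf Hg) Hg)).
by move=> xs _; rewrite {1}(divn_eq (f xs) (g xs)) addKn.
Qed.

Lemma primrec_half n f : primrec n f -> primrec n (fun xs => (f xs)./2).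
Proof.
move=> Hf; apply: primrec_ext (primrec_divn Hf (primrec_const n 2)).
by move=> xs _; rewrite divn2.
Qed.

Lemma primrec_odd n f : primrec n f -> primrec n (fun xs => nat_of_bool (odd (f xs))).
Proof.
move=> Hf; apply: primrec_ext (primrec_modn Hf (primrec_const n 2)).
by move=> xs _; rewrite modn2.
Qed.

Ltac primrec_arith :=
  lazymatch goal with
  | |- primrec _ (fun _ => _ %/ _) => apply: primrec_divn
  | |- primrec _ (fun _ => _ %% _) => apply: primrec_modn
  | |- primrec _ (fun _ => _./2) => apply: primrec_half
  | |- primrec _ (fun _ => nat_of_bool (odd _)) => apply: primrec_odd
  end.
Ltac primrec_hook ::= primrec_arith.

Lemma re_set_primrec (P : nat -> Prop) (b : nat -> nat -> bool) :
  primrec 2 (fun xs => nat_of_bool (b (nth 0 xs 0) (nth 0 xs 1))) ->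
  (forall x, P x <-> exists n, b n x) -> re_set P.
Proof.
move=> /primrec_negb [p p_b] P_b; exists p => x; rewrite P_b.
by split=> -[n b_nx]; exists n; move: b_nx; rewrite p_b //=; case: (b n x).
Qed.

(** * Codes *)

Definition tri s := (s * s.+1) %/ 2.

Lemma triS s : tri s.+1 = tri s + s.+1.
Proof. by rewrite /tri addnC -divnMDl //; congr (_ %/ 2); lia. Qed.

Lemma leq_tri m n : m <= n -> tri m <= tri n.
Proof. by move=> le_mn; rewrite /tri leq_div2r // leq_mul. Qed.

Lemma tri_root_ex x : exists s, tri s <= x < tri s.+1.
Proof.
elim: x => [|x [s /andP [le_sx lt_xs]]]; first by exists 0.
case: (ltnP x.+1 (tri s.+1)) => x_s; first by exists s; rewrite x_s andbT ltnW.
by exists s.+1; rewrite (triS s.+1) x_s /=; move: lt_xs; rewrite triS; lia.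
Qed.

(* The Cantor pair [nat_pair a b] lies in the block [tri (a + b) <= x < tri (a + b).+1]; its
   index [a + b] is recovered by counting the blocks below [x]. *)
Definition tri_root x := \sum_(0 <= s < x) (tri s.+1 <= x).
Definition nat_snd x := x - tri (tri_root x).
Definition nat_fst x := tri_root x - nat_snd x.

Lemma tri_rootE x s : tri s <= x < tri s.+1 -> tri_root x = s.
Proof.
move=> /andP [le_sx lt_xs]; rewrite /tri_root.
rewrite (eq_bigr (fun z => nat_of_bool (z < s))) => [|z _]; last first.
  congr nat_of_bool; case: (ltnP z s) => [lt_zs|le_sz].
    exact: leq_trans (leq_tri lt_zs) le_sx.
  by apply/negbTE; rewrite -ltnNge; apply: leq_trans lt_xs (leq_tri _).
rewrite sum_ltn; apply/minn_idPr; apply: leq_trans le_sx.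
by elim: {lt_xs}s => // s IH; rewrite triS; lia.
Qed.

Lemma tri_root_pair a b : tri_root (nat_pair a b) = a + b.
Proof. by apply: tri_rootE; rewrite /nat_pair -/(tri _) triS; lia. Qed.

Lemma nat_snd_pair a b : nat_snd (nat_pair a b) = b.
Proof. by rewrite /nat_snd tri_root_pair /nat_pair -/(tri _); lia. Qed.

Lemma nat_fst_pair a b : nat_fst (nat_pair a b) = a.
Proof. by rewrite /nat_fst nat_snd_pair tri_root_pair addnK. Qed.

Lemma nat_pairK x : nat_pair (nat_fst x) (nat_snd x) = x.
Proof.
have [s x_s] := tri_root_ex x; move: (x_s); rewrite triS /nat_fst /nat_snd (tri_rootE x_s).
by rewrite /nat_pair -/(tri _); move=> /andP [le_sx lt_xs]; rewrite subnK; lia.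
Qed.

Lemma nat_snd0 : nat_snd 0 = 0.
Proof. exact: sub0n. Qed.

Lemma nat_fst0 : nat_fst 0 = 0.
Proof. by rewrite /nat_fst nat_snd0 subn0 /tri_root big_geq. Qed.

Lemma nat_snd_leq x : nat_snd x <= x.
Proof. exact: leq_subr. Qed.

Lemma primrec_nat_fst n f : primrec n f -> primrec n (fun xs => nat_fst (f xs)).
Proof. by apply: primrec_unop; rewrite /nat_fst /nat_snd /tri_root /tri; primrec_auto. Qed.

Lemma primrec_nat_snd n f : primrec n f -> primrec n (fun xs => nat_snd (f xs)).
Proof. by apply: primrec_unop; rewrite /nat_snd /tri_root /tri; primrec_auto. Qed.

Lemma primrec_nat_pair n f g :
  primrec n f -> primrec n g -> primrec n (fun xs => nat_pair (f xs) (g xs)).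
Proof. by apply: primrec_binop; rewrite /nat_pair; primrec_auto. Qed.

Ltac primrec_pairing :=
  lazymatch goal with
  | |- primrec _ (fun _ => nat_fst _) => apply: primrec_nat_fst
  | |- primrec _ (fun _ => nat_snd _) => apply: primrec_nat_snd
  | |- primrec _ (fun _ => nat_pair _ _) => apply: primrec_nat_pair
  | _ => primrec_arith
  end.
Ltac primrec_hook ::= primrec_pairing.

Definition int_pos c := if odd c then 0 else c./2.
Definition int_neg c := if odd c then (c./2).+1 else 0.
Definition decode_int c : int := if odd c then Negz c./2 else Posz c./2.

Lemma decode_intK : cancel code_int decode_int.
Proof. by case=> n; rewrite /decode_int /= odd_double ?half_double ?uphalf_double. Qed.

Lemma code_intK : cancel decode_int code_int.
Proof.
move=> c; rewrite /decode_int -[in RHS](odd_double_half c).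
by case: (odd c).
Qed.

Lemma decode_intE c : decode_int c = ((int_pos c)%:Z - (int_neg c)%:Z)%R.
Proof. by rewrite /decode_int /int_pos /int_neg; case: (odd c); rewrite ?NegzE ?subr0 ?sub0r. Qed.

Lemma normz_decode_int c : `|decode_int c|%N = int_pos c + int_neg c.
Proof. by rewrite /decode_int /int_pos /int_neg; case: (odd c) => //=; rewrite addn0. Qed.

Definition coprime_trial a b := all (fun d => ~~ ((d.+2 %| a) && (d.+2 %| b))) (iota 0 b).

Lemma coprime_trialE a b : 0 < b -> coprime_trial a b = coprime a b.
Proof.
move=> b_gt0; apply/allP/idP => [no_div|cop_ab d _]; last first.
  by rewrite -dvdn_gcd (eqP cop_ab) dvdn1.
have g_gt0 : 0 < gcdn a b by rewrite gcdn_gt0 b_gt0 orbT.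
have g_le : gcdn a b <= b by rewrite dvdn_leq ?dvdn_gcdr.
rewrite /coprime; apply/negPn/negP => g_ne1.
have := no_div (gcdn a b - 2); rewrite mem_iota.
have -> : (gcdn a b - 2).+2 = gcdn a b by move/eqP: g_ne1; lia.
by rewrite dvdn_gcdl dvdn_gcdr => /(_ _)/negP; apply; lia.
Qed.

Definition rat_codeb r :=
  [&& ~~ odd (nat_snd r), 0 < (nat_snd r)./2 &
      coprime_trial (int_pos (nat_fst r) + int_neg (nat_fst r)) (nat_snd r)./2].

Definition decode_rat r : rat :=
  ((decode_int (nat_fst r))%:~R / (decode_int (nat_snd r))%:~R)%R.

Lemma decode_ratK : cancel code_rat decode_rat.
Proof. by move=> q; rewrite /decode_rat nat_fst_pair nat_snd_pair !decode_intK divq_num_den. Qed.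

Lemma rat_codeb_code q : rat_codeb (code_rat q).
Proof.
rewrite /rat_codeb /code_rat nat_fst_pair nat_snd_pair -normz_decode_int decode_intK.
have := coprime_num_den q; have := denq_gt0 q.
case: (denq q) => // d; rewrite ltz_nat => d_gt0.
by rewrite /= odd_double half_double d_gt0 coprime_trialE.
Qed.

Lemma code_ratK r : rat_codeb r -> code_rat (decode_rat r) = r.
Proof.
move=> /and3P [snd_even half_gt0 cop].
have den : decode_int (nat_snd r) = Posz (nat_snd r)./2 by rewrite /decode_int (negbTE snd_even).
have cop' : coprime `|decode_int (nat_fst r)| `|decode_int (nat_snd r)|.
  by rewrite normz_decode_int den -coprime_trialE.
rewrite /code_rat /decode_rat coprimeq_num // coprimeq_den // den.
have -> : (Posz (nat_snd r)./2 == 0%R) = false by apply/negbTE; rewrite eqz_nat -lt0n.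
rewrite gtr0_sg ?ltz_nat // mul1r ger0_norm // -den.
by rewrite !code_intK nat_pairK.
Qed.

Definition code_tail c := nat_snd c.-1.
Definition code_head c := nat_fst c.-1.
Definition code_nth c j := code_head (iter j code_tail c).
Definition code_size c := \sum_(0 <= j < c) (iter j code_tail c != 0).

Lemma code_tail_lt c : 0 < c -> code_tail c < c.
Proof. by move=> c_gt0; rewrite /code_tail (leq_ltn_trans (nat_snd_leq _)) // prednK. Qed.

Lemma iter_code_tail s j : iter j code_tail (code_seq s) = code_seq (drop j s).
Proof.
have tail0 : code_tail 0 = 0 by exact: nat_snd0.
elim: j s => [|j IH] s; first by rewrite drop0.
rewrite iterSr; case: s => [|q s]; first by rewrite tail0 (IH [::]).
by rewrite /= {2}/code_tail /= nat_snd_pair IH.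
Qed.

Lemma size_leq_code_seq s : size s <= code_seq s.
Proof. by elim: s => //= q s IH; rewrite ltnS (leq_trans IH) // /nat_pair leq_addl. Qed.

Lemma code_seq_eq0 s : (code_seq s == 0) = (s == [::]).
Proof. by case: s. Qed.

Lemma code_size_seq s : code_size (code_seq s) = size s.
Proof.
rewrite /code_size (eq_bigr (fun j => nat_of_bool (j < size s))) => [|j _].
  by rewrite sum_ltn; apply/minn_idPr/size_leq_code_seq.
by rewrite iter_code_tail code_seq_eq0 -size_eq0 size_drop subn_eq0 ltnNge.
Qed.

Lemma code_nth_seq s j : j < size s -> code_nth (code_seq s) j = code_rat (nth 0%R s j).
Proof.
by move=> lt_js; rewrite /code_nth iter_code_tail (drop_nth 0%R lt_js) /code_head /= nat_fst_pair.
Qed.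

Definition seq_codeb c :=
  all (fun j => (iter j code_tail c != 0) ==> rat_codeb (code_nth c j)) (iota 0 c).

Lemma seq_codeb_code s : seq_codeb (code_seq s).
Proof.
apply/allP => j _; rewrite iter_code_tail code_seq_eq0; apply/implyP.
rewrite -size_eq0 size_drop subn_eq0 -ltnNge => lt_js.
by rewrite code_nth_seq ?rat_codeb_code.
Qed.

Lemma decode_seq c : seq_codeb c -> exists s, code_seq s = c.
Proof.
elim/ltn_ind: c => c IH /allP ok_c; case: (posnP c) => [->|c_gt0]; first by exists [::].
have [|s tail_s] := IH _ (code_tail_lt c_gt0).
  apply/allP => j; rewrite mem_iota /= => lt_j; rewrite /code_nth -!iterSr.
  by apply: ok_c; rewrite mem_iota; move: lt_j (code_tail_lt c_gt0); lia.
have ok_head : rat_codeb (code_nth c 0).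
  by move/implyP: (ok_c 0); rewrite mem_iota -lt0n c_gt0; apply.
exists (decode_rat (code_head c) :: s) => /=.
by rewrite code_ratK // tail_s /code_head /code_tail nat_pairK prednK.
Qed.

Lemma primrec_code_nth n f g :
  primrec n f -> primrec n g -> primrec n (fun xs => code_nth (f xs) (g xs)).
Proof. by apply: primrec_binop; rewrite /code_nth /code_head /code_tail; primrec_auto. Qed.

Lemma primrec_code_size n f : primrec n f -> primrec n (fun xs => code_size (f xs)).
Proof. by apply: primrec_unop; rewrite /code_size /code_tail; primrec_auto. Qed.

Lemma primrec_int_pos n f : primrec n f -> primrec n (fun xs => int_pos (f xs)).
Proof. by apply: primrec_unop; rewrite /int_pos; primrec_auto. Qed.

Lemma primrec_int_neg n f : primrec n f -> primrec n (fun xs => int_neg (f xs)).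
Proof. by apply: primrec_unop; rewrite /int_neg; primrec_auto. Qed.

Ltac primrec_codes :=
  lazymatch goal with
  | |- primrec _ (fun _ => code_nth _ _) => apply: primrec_code_nth
  | |- primrec _ (fun _ => code_size _) => apply: primrec_code_size
  | |- primrec _ (fun _ => int_pos _) => apply: primrec_int_pos
  | |- primrec _ (fun _ => int_neg _) => apply: primrec_int_neg
  | _ => primrec_pairing
  end.
Ltac primrec_hook ::= primrec_codes.

Lemma primrec_rat_codeb n f :
  primrec n f -> primrec n (fun xs => nat_of_bool (rat_codeb (f xs))).
Proof.
apply: (@primrec_unop (fun c => nat_of_bool (rat_codeb c))).
by rewrite /rat_codeb /coprime_trial /dvdn; primrec_auto.
Qed.

Lemma primrec_seq_codeb n f :
  primrec n f -> primrec n (fun xs => nat_of_bool (seq_codeb (f xs))).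
Proof.
apply: (@primrec_unop (fun c => nat_of_bool (seq_codeb c))).
by rewrite /seq_codeb /code_tail; primrec_auto; apply: primrec_rat_codeb; primrec_auto.
Qed.

(** * Rational arithmetic on codes *)

(* A rational is coded by a triple [(p, m, d)] of naturals with value [(p - m) / (d + 1)]; the
   shift of the denominator makes every natural number a valid code. *)
Definition qtriple p m d := nat_pair p (nat_pair m d).
Definition qnum_pos c := nat_fst c.
Definition qnum_neg c := nat_fst (nat_snd c).
Definition qden c := (nat_snd (nat_snd c)).+1.

Definition qval c : rat := (((qnum_pos c)%:R - (qnum_neg c)%:R) / (qden c)%:R)%R.

(* The operations are locked: unfolded, they make unification explore large arithmetic terms. *)
Fact qadd_key : unit. Proof. by []. Qed.
Definition qadd := locked_with qadd_key (fun x y => qtriple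
  (qnum_pos x * qden y + qnum_pos y * qden x)
  (qnum_neg x * qden y + qnum_neg y * qden x) (qden x * qden y).-1).
Canonical qadd_unlockable := [unlockable fun qadd].

Fact qmul_key : unit. Proof. by []. Qed.
Definition qmul := locked_with qmul_key (fun x y => qtriple
  (qnum_pos x * qnum_pos y + qnum_neg x * qnum_neg y)
  (qnum_pos x * qnum_neg y + qnum_neg x * qnum_pos y) (qden x * qden y).-1).
Canonical qmul_unlockable := [unlockable fun qmul].

Fact qopp_key : unit. Proof. by []. Qed.
Definition qopp := locked_with qopp_key (fun x => qtriple (qnum_neg x) (qnum_pos x) (qden x).-1).
Canonical qopp_unlockable := [unlockable fun qopp].

Fact qnorm_key : unit. Proof. by []. Qed.
Definition qnorm := locked_with qnorm_key
  (fun x => qtriple (qnum_pos x - qnum_neg x + (qnum_neg x - qnum_pos x)) 0 (qden x).-1).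
Canonical qnorm_unlockable := [unlockable fun qnorm].

Definition qleb x y :=
  qnum_pos x * qden y + qnum_neg y * qden x <= qnum_pos y * qden x + qnum_neg x * qden y.
Definition qzero := qtriple 0 0 0.
Definition qone := qtriple 1 0 0.
Definition qexp x k := iter k (qmul x) qone.
Definition qsum k (F : nat -> nat) :=
  nat_rect (fun _ => nat) qzero (fun i acc => qadd acc (F i)) k.
Definition qrat_code r :=
  qtriple (int_pos (nat_fst r)) (int_neg (nat_fst r)) ((nat_snd r)./2).-1.

Lemma qden_gt0 c : 0 < qden c.
Proof. by []. Qed.

Lemma qtripleK p m d : [/\ qnum_pos (qtriple p m d) = p, qnum_neg (qtriple p m d) = m
  & qden (qtriple p m d) = d.+1].
Proof. by rewrite /qnum_pos /qnum_neg /qden /qtriple !nat_snd_pair !nat_fst_pair. Qed.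

Lemma qden_mulK x y : (qden x * qden y).-1.+1 = qden x * qden y.
Proof. by rewrite prednK // muln_gt0. Qed.

Local Open Scope ring_scope.

Lemma qval_triple p m d : qval (qtriple p m d) = (p%:R - m%:R) / d.+1%:R.
Proof. by case: (qtripleK p m d) => Hp Hm Hd; rewrite /qval Hp Hm Hd. Qed.

Lemma qden_neq0 c : (qden c)%:R != 0 :> rat.
Proof. by rewrite pnatr_eq0 -lt0n qden_gt0. Qed.

Lemma qvalD x y : qval (qadd x y) = qval x + qval y.
Proof.
rewrite [qadd]unlock qval_triple qden_mulK /qval !natrM !natrD !natrM.
by field; rewrite !qden_neq0.
Qed.

Lemma qvalM x y : qval (qmul x y) = qval x * qval y.
Proof.
rewrite [qmul]unlock qval_triple qden_mulK /qval !natrM !natrD !natrM.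
by field; rewrite !qden_neq0.
Qed.

Lemma qvalN x : qval (qopp x) = - qval x.
Proof. by rewrite [qopp]unlock qval_triple /qval prednK // -mulNr opprB. Qed.

Lemma qval_norm x : qval (qnorm x) = `|qval x|.
Proof.
rewrite [qnorm]unlock qval_triple /qval prednK // normrM normfV normr_nat subr0; congr (_ / _).
have [le_pm|lt_mp] := leqP (qnum_pos x) (qnum_neg x).
  rewrite (eqP (le_pm : qnum_pos x - qnum_neg x == 0)%N) add0n natrB //.
  by rewrite distrC ger0_norm // subr_ge0 ler_nat.
have le_mp := ltnW lt_mp; rewrite (eqP (le_mp : qnum_neg x - qnum_pos x == 0)%N) addn0.
by rewrite natrB // ger0_norm // subr_ge0 ler_nat.
Qed.

Lemma qlebE x y : qleb x y = (qval x <= qval y).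
Proof.
rewrite /qval ler_pdivrMr ?ltr0n // mulrAC ler_pdivlMr ?ltr0n //.
rewrite !mulrBl -!natrM lerBrDr addrAC lerBlDr -!natrD ler_nat.
by rewrite /qleb.
Qed.

Lemma qval_zero : qval qzero = 0.
Proof. by rewrite qval_triple subr0 mul0r. Qed.

Lemma qval_one : qval qone = 1.
Proof. by rewrite qval_triple subr0 divr1. Qed.

Lemma qvalX x k : qval (qexp x k) = qval x ^+ k.
Proof. by elim: k => [|k IH]; rewrite ?qval_one // /qexp iterS qvalM -/(qexp x k) IH exprS. Qed.

Lemma qval_sum k F : qval (qsum k F) = \sum_(0 <= i < k) qval (F i).
Proof.
elim: k => [|k IH]; first by rewrite big_geq // qval_zero.
by rewrite big_nat_recr //= qvalD IH.
Qed.

Lemma qval_qrat_code r : rat_codeb r -> qval (qrat_code r) = decode_rat r.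
Proof.
case/and3P => den_even den_gt0 _.
rewrite /decode_rat qval_triple prednK // decode_intE.
by rewrite /decode_int (negbTE den_even) rmorphB.
Qed.

Lemma qval_code_rat q : qval (qrat_code (code_rat q)) = q.
Proof. by rewrite qval_qrat_code ?rat_codeb_code ?decode_ratK. Qed.

Lemma qval_qrat_code0 : qval (qrat_code 0) = 0.
Proof.
by rewrite /qrat_code nat_fst0 nat_snd0 qval_triple subrr mul0r.
Qed.

Local Open Scope nat_scope.

Lemma primrec_qtriple n f g h : primrec n f -> primrec n g -> primrec n h ->
  primrec n (fun xs => qtriple (f xs) (g xs) (h xs)).
Proof. by move=> Hf Hg Hh; rewrite /qtriple; primrec_auto. Qed.

Ltac primrec_qtriples :=
  lazymatch goal with
  | |- primrec _ (fun _ => qtriple _ _ _) => apply: primrec_qtriple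
  | _ => primrec_codes
  end.
Ltac primrec_hook ::= primrec_qtriples.

Lemma primrec_qadd n f g :
  primrec n f -> primrec n g -> primrec n (fun xs => qadd (f xs) (g xs)).
Proof.
by apply: primrec_binop; rewrite [qadd]unlock /qnum_pos /qnum_neg /qden; primrec_auto.
Qed.

Lemma primrec_qmul n f g :
  primrec n f -> primrec n g -> primrec n (fun xs => qmul (f xs) (g xs)).
Proof.
by apply: primrec_binop; rewrite [qmul]unlock /qnum_pos /qnum_neg /qden; primrec_auto.
Qed.

Lemma primrec_qopp n f : primrec n f -> primrec n (fun xs => qopp (f xs)).
Proof. by apply: primrec_unop; rewrite [qopp]unlock /qnum_pos /qnum_neg /qden; primrec_auto. Qed.

Lemma primrec_qnorm n f : primrec n f -> primrec n (fun xs => qnorm (f xs)).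
Proof.
by apply: primrec_unop; rewrite [qnorm]unlock /qnum_pos /qnum_neg /qden; primrec_auto.
Qed.

Lemma primrec_qleb n f g : primrec n f -> primrec n g ->
  primrec n (fun xs => nat_of_bool (qleb (f xs) (g xs))).
Proof.
apply: (@primrec_binop (fun x y => nat_of_bool (qleb x y))).
by rewrite /qleb /qnum_pos /qnum_neg /qden; primrec_auto.
Qed.

Lemma primrec_qexp n f g :
  primrec n f -> primrec n g -> primrec n (fun xs => qexp (f xs) (g xs)).
Proof.
move=> Hf Hg; apply: (primrec_iter (G := fun v xs => qmul (f xs) v)) Hg _ => //.
  exact: primrec_qmul (primrec_behead Hf) (primrec_nth _ 0).
by rewrite /qone; primrec_auto.
Qed.

Lemma primrec_qsum n F B : primrec n.+1 (fun ys => F (nth 0 ys 0) (behead ys)) -> primrec n B ->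
  primrec n (fun xs => qsum (B xs) (fun i => F i xs)).
Proof.
move=> HF HB; apply: (primrec_nat_rect (G := fun m acc xs => qadd acc (F m xs))) HB _ _.
  by primrec_auto.
exact: primrec_qadd (primrec_nth _ 1) (primrec_drop_snd HF).
Qed.

Lemma primrec_qrat_code n f : primrec n f -> primrec n (fun xs => qrat_code (f xs)).
Proof. by apply: primrec_unop; rewrite /qrat_code; primrec_auto. Qed.

Ltac primrec_rationals :=
  lazymatch goal with
  | |- primrec _ (fun _ => qadd _ _) => apply: primrec_qadd
  | |- primrec _ (fun _ => qmul _ _) => apply: primrec_qmul
  | |- primrec _ (fun _ => qopp _) => apply: primrec_qopp
  | |- primrec _ (fun _ => qnorm _) => apply: primrec_qnorm
  | |- primrec _ (fun _ => nat_of_bool (qleb _ _)) => apply: primrec_qleb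
  | |- primrec _ (fun _ => qexp _ _) => apply: primrec_qexp
  | |- primrec _ (fun _ => qsum _ _) => apply: primrec_qsum
  | |- primrec _ (fun _ => qrat_code _) => apply: primrec_qrat_code
  | |- primrec _ (fun _ => nat_of_bool (rat_codeb _)) => apply: primrec_rat_codeb
  | |- primrec _ (fun _ => nat_of_bool (seq_codeb _)) => apply: primrec_seq_codeb
  | _ => primrec_qtriples
  end.
Ltac primrec_hook ::= primrec_rationals.

(** * The decision procedure *)

Definition lam_code x := qrat_code (nat_fst x).
Definition target_code x := qrat_code (nat_fst (nat_snd x)).
Definition weights_code x := nat_snd (nat_snd x).
Definition weight_code x j := qrat_code (code_nth (weights_code x) j).
Definition nweights x := code_size (weights_code x).

(* The words of length [N] over [k] letters are indexed by the base-[k] digits of [u < k ^ N]. *)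
Definition digit k u i := u %/ k ^ i %% k.

Definition prefix_sum_code x N u :=
  qsum N (fun i => qmul (weight_code x (digit (nweights x) u i)) (qexp (lam_code x) i)).
Definition mass_code x := qsum (nweights x) (fun j => qnorm (weight_code x j)).
Definition prefix_okb x N u :=
  qleb (qmul (qadd qone (qopp (lam_code x)))
             (qnorm (qadd (target_code x) (qopp (prefix_sum_code x N u)))))
       (qmul (qexp (lam_code x) N) (mass_code x)).
Definition prefixes_badb x N := all (fun u => ~~ prefix_okb x N u) (iota 0 (nweights x ^ N)).

Definition instance_codeb x :=
  [&& rat_codeb (nat_fst x), ~~ qleb (lam_code x) qzero, ~~ qleb qone (lam_code x),
      rat_codeb (nat_fst (nat_snd x)) & seq_codeb (weights_code x)].

Lemma primrec_decision :
  primrec 2 (fun xs =>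
    nat_of_bool (instance_codeb (nth 0 xs 1) && prefixes_badb (nth 0 xs 1) (nth 0 xs 0))).
Proof.
rewrite /instance_codeb /prefixes_badb /prefix_okb /prefix_sum_code /mass_code.
by rewrite /lam_code /target_code /weight_code /nweights /weights_code /digit; primrec_auto.
Qed.

Lemma digit_lt k u i : 0 < k -> digit k u i < k.
Proof. by move=> k_gt0; rewrite /digit ltn_pmod. Qed.

Lemma digits_surj k N f : (forall i, i < N -> f i < k) ->
  exists2 u, u < k ^ N & forall i, i < N -> digit k u i = f i.
Proof.
elim: N f => [|N IH] f f_lt; first by exists 0.
have k_gt0 : 0 < k by apply: leq_ltn_trans (f_lt 0 _).
have [u u_lt u_digits] := IH (fun i => f i.+1) (fun i lt_iN => f_lt i.+1 lt_iN).
have f0_lt := f_lt 0 isT.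
exists (u * k + f 0).
  by rewrite expnS mulnC; move: f0_lt u_lt; nia.
case=> [|i] lt_iN; first by rewrite /digit expn0 divn1 modnMDl modn_small.
by rewrite /digit expnS divnMA divnMDl // (divn_small f0_lt) addn0; apply: u_digits.
Qed.

Local Open Scope ring_scope.

Section InstanceCode.

Variables (lam t : rat) (ws : seq rat).
Let x := code_instance lam t ws.

Lemma lam_code_instance : qval (lam_code x) = lam.
Proof. by rewrite /lam_code /x /code_instance nat_fst_pair qval_code_rat. Qed.

Lemma target_code_instance : qval (target_code x) = t.
Proof. by rewrite /target_code /x /code_instance nat_snd_pair nat_fst_pair qval_code_rat. Qed.

Lemma nweights_instance : nweights x = size ws.
Proof. by rewrite /nweights /weights_code /x /code_instance !nat_snd_pair code_size_seq. Qed.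

Lemma weight_code_instance j : qval (weight_code x j) = nth 0 ws j.
Proof.
rewrite /weight_code /weights_code /x /code_instance !nat_snd_pair.
have [lt_js|le_sj] := ltnP j (size ws); first by rewrite code_nth_seq // qval_code_rat.
rewrite nth_default // /code_nth iter_code_tail drop_oversize //.
by rewrite /code_head /= nat_fst0 qval_qrat_code0.
Qed.

End InstanceCode.

Section Decoded.

Variables (x : nat) (lam t : rat) (ws : seq rat).
Hypotheses (lam_x : qval (lam_code x) = lam) (t_x : qval (target_code x) = t)
  (size_x : nweights x = size ws) (ws_x : forall j, qval (weight_code x j) = nth 0 ws j).

Lemma prefix_okbE N u : prefix_okb x N u =
  ((1 - lam) * `|t - \sum_(0 <= i < N) nth 0 ws (digit (size ws) u i) * lam ^+ i|
     <= lam ^+ N * \sum_(a <- ws) `|a|).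
Proof.
rewrite /prefix_okb qlebE !qvalM qvalD qval_one qvalN qval_norm qvalD qvalN qvalX.
rewrite /prefix_sum_code /mass_code !qval_sum lam_x t_x.
rewrite size_x [\sum_(a <- ws) _](big_nth 0).
congr (_ * `|_ - _| <= _ * _); apply: eq_bigr => i _.
  by rewrite qvalM ws_x qvalX lam_x.
by rewrite qval_norm ws_x.
Qed.

Lemma prefixes_badP N : prefixes_badb x N <-> ~ approx_prefix lam t ws N.
Proof.
split=> [/allP bad [w [w_in ok]] | no_approx].
  have [|u u_lt u_digits] := @digits_surj (size ws) N (fun i => index (w i) ws).
    by move=> i /w_in; rewrite index_mem.
  have := bad u; rewrite mem_iota size_x u_lt => /(_ isT); rewrite prefix_okbE.
  rewrite (eq_big_nat _ _ (F2 := fun i => w i * lam ^+ i)) ?ok // => i /andP [_ lt_iN].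
  by rewrite u_digits // nth_index ?w_in.
apply/allP => u; rewrite mem_iota size_x => /andP [_ u_lt].
apply/negP; rewrite prefix_okbE => ok; apply: no_approx.
exists (fun i => nth 0 ws (digit (size ws) u i)); split=> // i lt_iN.
apply: mem_nth; apply: digit_lt; case: (size ws) u_lt => //; rewrite exp0n //; lia.
Qed.

End Decoded.

Lemma prefixes_bad_instanceP lam t ws N :
  prefixes_badb (code_instance lam t ws) N <-> ~ approx_prefix lam t ws N.
Proof.
exact: (prefixes_badP (lam_code_instance lam t ws) (target_code_instance lam t ws)
  (nweights_instance lam t ws) (weight_code_instance lam t ws) N).
Qed.

Lemma instance_codeb_code lam t ws : 0 < lam < 1 -> instance_codeb (code_instance lam t ws).
Proof.
case/andP => lam_gt0 lam_lt1.
rewrite /instance_codeb !qlebE lam_code_instance qval_zero qval_one -!ltNge lam_gt0 lam_lt1.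
rewrite /code_instance /weights_code !nat_snd_pair !nat_fst_pair.
by rewrite !rat_codeb_code seq_codeb_code.
Qed.

Lemma instance_codeb_decode x : instance_codeb x ->
  exists lam t ws, 0 < lam < 1 /\ x = code_instance lam t ws.
Proof.
case/and5P => lam_ok lam_gt0 lam_lt1 t_ok /decode_seq [ws ws_x].
exists (decode_rat (nat_fst x)), (decode_rat (nat_fst (nat_snd x))), ws; split.
  rewrite -(qval_qrat_code lam_ok) -/(lam_code x) ltNge -qval_zero -qlebE lam_gt0 /=.
  by rewrite ltNge -qval_one -qlebE.
by rewrite /code_instance !code_ratK // ws_x !nat_pairK.
Qed.

Theorem theorem21 : re_set gtds_no_solution_set.
Proof.
apply: (re_set_primrec (b := fun N x => instance_codeb x && prefixes_badb x N)).
  exact: primrec_decision.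
move=> x; split=> [[lam [t [ws [lam01 [-> no_sol]]]]] |].
  have [N no_approx] : exists N, ~ approx_prefix lam t ws N.
    by apply/existsNP => all_N; apply/no_sol/(gtds_has_solutionP t ws lam01).
  by exists N; rewrite instance_codeb_code //=; apply/prefixes_bad_instanceP.
move=> [N /andP [/instance_codeb_decode [lam [t [ws [lam01 ->]]]] bad]].
exists lam, t, ws; split=> //; split=> // sol.
by move/prefixes_bad_instanceP: bad; apply; apply: (gtds_has_solutionP t ws lam01).1 sol N.
Qed.
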